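(* Let $\alpha\in(0,1)$, $m=\alpha n$, $c\in\mathbb{N}$, $q=2^{m+c}$. Then for all $\gamma>1$ and $k\ge 3.6-\frac54\log_2\alpha$, setting $f=\frac{k\ln m}{m}$, there exists $N_k>0$ such that for all $n\ge N_k$, $\epsilon(n,m,q,f)\le\gamma\frac{2^c}{q-1}$.
   Context: For $q\ge2$: $w^*(n,q)=\max\{w\ge0:\sum_{j=1}^w\binom{n}{j}\le q-1\}$, $r(n,q)=q-1-\sum_{w=1}^{w^*(n,q)}\binom{n}{w}$, and $$\epsilon(n,m,q,f)=\frac{1}{q-1}\left[\sum_{w=1}^{w^*(n,q)}\binom{n}{w}\frac{1}{2^m}(1+(1-2f)^w)^m+\frac{r(n,q)}{2^m}(1+(1-2f)^{w^*(n,q)+1})^m\right].$$ $\ln$ is the natural logarithm. *)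

From Stdlib Require Import Reals Lra.
Open Scope R_scope.

Fixpoint binsum (n w : nat) : R :=
  match w with
  | O => 0
  | S w' => binsum n w' + Binomial.C n w
  end.

Fixpoint wsearch (n : nat) (q : R) (w : nat) : nat :=
  match w with
  | O => O
  | S w' => if Rle_dec (binsum n w) (q - 1) then w else wsearch n q w'
  end.

(* w*(n,q) = max{ w >= 0 : sum_{j=1}^w binom(n,j) <= q-1 }.
   The search is restricted to w <= n (binomials vanish beyond n); this
   agrees with the paper whenever q - 1 < 2^n - 1, the only case where the
   max is finite. *)
Definition wstar (n : nat) (q : R) : nat := wsearch n q n.

Definition rem (n : nat) (q : R) : R := q - 1 - binsum n (wstar n q).

Fixpoint epssum (n m : nat) (f : R) (W : nat) : R :=
  match W with
  | O => 0
  | S W' => epssum n m f W'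
            + Binomial.C n W * / 2 ^ m * (1 + (1 - 2 * f) ^ W) ^ m
  end.

Definition epsilon (n m : nat) (q f : R) : R :=
  / (q - 1) *
  (epssum n m f (wstar n q)
   + rem n q / 2 ^ m * (1 + (1 - 2 * f) ^ (S (wstar n q))) ^ m).

Definition log2 (x : R) : R := ln x / ln 2.

From Stdlib Require Import Reals Lra Lia Factorial.
Open Scope R_scope.

(* With f = k ln m / m, write u = 2fw, so that (1 - 2f)^w <= exp (-u). The weights
   binom(n, w) (w <= w* ) and r add up to q - 1, so it suffices that for every w either the
   summand 2^-m (1 + (1-2f)^w)^m is at most e^lam 2^-m, which costs at most
   e^lam 2^c <= (1 + gamma)/2 * 2^c in total, or binom(n, w) times the summand is bounded by the
   w-th term of a series of sum at most (gamma - 1)/2.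
   - If u >= ln m + ln (1/lam), then m (1-2f)^w <= lam and the first alternative holds.
   - If u <= 1, then binom(n, w) <= n^w and the summand is at most m^(-k w/2): a geometric
     series of ratio n m^(-k/2) -> 0, as k > 2.
   - Otherwise binom(n, w) <= (e n / w)^w, and with t = ln m / u the product is at most
     exp(A + ln t - k t (1 - e^-u))^w, where A = ln (2 e k / alpha). The lower bound on k is
     exactly what makes k > A, which puts this exponent below some -delta < 0; since
     w >= m / (2 k ln m) in this range, these terms sum to o(1). *)

Lemma exp_le x y : x <= y -> exp x <= exp y.
Proof. intros [Hlt | ->]; [left; apply exp_increasing; exact Hlt | lra]. Qed.

Lemma ln_le x y : 0 < x -> x <= y -> ln x <= ln y.
Proof. intros Hx [Hlt | ->]; [left; apply ln_increasing; assumption | lra]. Qed.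

Lemma ln_le_sub1 x : 0 < x -> ln x <= x - 1.
Proof. intros Hx. pose proof (exp_ineq1_le (ln x)) as H. rewrite exp_ln in H; lra. Qed.

Lemma exp_pow a n : exp a ^ n = exp (a * INR n).
Proof.
  induction n as [|n IH].
  - simpl. rewrite Rmult_0_r, exp_0. reflexivity.
  - rewrite <- tech_pow_Rmult, IH, <- exp_plus, S_INR. f_equal; ring.
Qed.

Lemma exp_1_ge_2 : 2 <= exp 1.
Proof. pose proof (exp_ineq1_le 1); lra. Qed.

Lemma ln_2_lt : ln 2 < 3/4.
Proof.
  assert (H : 2 < exp (3/4)).
  { replace (3/4) with (1/8 * INR 6) by (simpl; lra). rewrite <- exp_pow.
    apply Rlt_le_trans with ((1 + 1/8) ^ 6); [simpl; lra|].
    apply pow_incr. pose proof (exp_ineq1_le (1/8)); lra. }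
  rewrite <- (ln_exp (3/4)). apply ln_increasing; lra.
Qed.

Lemma exp_neg_le_1_sub_half u : 0 <= u <= 1 -> exp (- u) <= 1 - u / 2.
Proof.
  intros Hu. rewrite exp_Ropp. pose proof (exp_ineq1_le u).
  apply Rle_trans with (/ (1 + u)); [apply Rinv_le_contravar; lra|].
  apply Rmult_le_reg_r with (1 + u); [lra|]. rewrite Rinv_l; nra.
Qed.

Definition eventually (P : R -> Prop) : Prop := exists L0, forall L, L0 <= L -> P L.

Lemma eventually_and (P Q : R -> Prop) :
  eventually P -> eventually Q -> eventually (fun L => P L /\ Q L).
Proof.
  intros [L1 H1] [L2 H2]. exists (Rmax L1 L2). intros L HL.
  pose proof (Rmax_l L1 L2); pose proof (Rmax_r L1 L2).
  split; [apply H1 | apply H2]; lra.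
Qed.

Lemma eventually_ge x : eventually (fun L => x <= L).
Proof. exists x. tauto. Qed.

Lemma eventually_exp_ge_mul C : eventually (fun L => C * L <= exp L).
Proof.
  exists (Rmax 0 (4 * C)). intros L HL.
  pose proof (Rmax_l 0 (4 * C)); pose proof (Rmax_r 0 (4 * C)).
  assert (Hsq : (L / 2) * (L / 2) <= exp L).
  { replace L with (L / 2 + L / 2) at 3 by field. rewrite exp_plus.
    pose proof (exp_ineq1_le (L / 2)). apply Rmult_le_compat; lra. }
  nra.
Qed.

Lemma eventually_exp_neg_le a eps :
  0 < a -> 0 < eps -> eventually (fun L => exp (- (a * L)) <= eps).
Proof.
  intros Ha Heps. exists (- ln eps / a). intros L HL.
  rewrite <- (exp_ln eps Heps). apply exp_le.
  apply Rmult_le_compat_l with (r := a) in HL; [|lra].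
  replace (a * (- ln eps / a)) with (- ln eps) in HL by (field; lra). lra.
Qed.

Lemma eventually_exp_neg_exp_div_le a eps :
  0 < a -> 0 < eps -> eventually (fun L => exp (- (a * exp L / L)) <= eps).
Proof.
  intros Ha Heps.
  destruct (eventually_and _ _ (eventually_ge 1)
              (eventually_exp_ge_mul (Rabs (ln eps) / a))) as [L0 H].
  exists L0. intros L HL. destruct (H L HL) as [HL1 Hexp].
  rewrite <- (exp_ln eps Heps). apply exp_le.
  assert (Habs : Rabs (ln eps) <= a * exp L / L).
  { apply Rmult_le_reg_r with (L / a); [apply Rdiv_lt_0_compat; lra|].
    replace (a * exp L / L * (L / a)) with (exp L) by (field; lra).
    replace (Rabs (ln eps) * (L / a)) with (Rabs (ln eps) / a * L) by (field; lra).
    exact Hexp. }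
  pose proof (Rle_abs (- ln eps)). rewrite Rabs_Ropp in *. lra.
Qed.

Lemma C_nonneg n w : 0 <= Binomial.C n w.
Proof.
  unfold Binomial.C. pose proof (INR_fact_lt_0 n); pose proof (INR_fact_lt_0 w);
  pose proof (INR_fact_lt_0 (n - w)).
  left. apply Rdiv_lt_0_compat; [assumption | apply Rmult_lt_0_compat; assumption].
Qed.

Lemma fact_add_le j w : (fact (j + w) <= (j + w) ^ w * fact j)%nat.
Proof.
  induction w as [|w IH].
  - rewrite Nat.add_0_r; simpl; lia.
  - replace (j + S w)%nat with (S (j + w)) by lia.
    rewrite fact_simpl, Nat.pow_succ_r'. rewrite <- Nat.mul_assoc.
    apply Nat.mul_le_mono_l. eapply Nat.le_trans; [exact IH|].
    apply Nat.mul_le_mono_r, Nat.pow_le_mono_l; lia.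
Qed.

Lemma C_le_pow_div_fact n w :
  (w <= n)%nat -> Binomial.C n w <= INR n ^ w / INR (fact w).
Proof.
  intros Hw. unfold Binomial.C.
  pose proof (fact_add_le (n - w) w) as F. replace (n - w + w)%nat with n in F by lia.
  apply le_INR in F. rewrite mult_INR, pow_INR in F.
  pose proof (INR_fact_lt_0 w); pose proof (INR_fact_lt_0 (n - w)).
  replace (INR n ^ w / INR (fact w))
    with (INR n ^ w * INR (fact (n - w)) / (INR (fact w) * INR (fact (n - w))))
    by (field; lra).
  unfold Rdiv. apply Rmult_le_compat_r; [|exact F].
  left. apply Rinv_0_lt_compat, Rmult_lt_0_compat; assumption.
Qed.

Lemma C_le_pow n w : (w <= n)%nat -> Binomial.C n w <= INR n ^ w.
Proof.
  intros Hw. eapply Rle_trans; [apply C_le_pow_div_fact, Hw|].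
  assert (H1 : 1 <= INR (fact w)) by (apply (le_INR 1), lt_O_fact).
  pose proof (pow_le (INR n) w (pos_INR n)).
  unfold Rdiv. rewrite <- (Rmult_1_r (INR n ^ w)) at 2.
  apply Rmult_le_compat_l; [assumption|]. rewrite <- Rinv_1. apply Rinv_le_contravar; lra.
Qed.

Lemma succ_pow_le_exp_mul_pow w : INR (S w) ^ w <= exp 1 * INR w ^ w.
Proof.
  destruct w as [|w]; [rewrite !pow_O; pose proof exp_1_ge_2; lra|].
  assert (Hx : 0 < INR (S w)) by (apply lt_0_INR; lia).
  replace (INR (S (S w))) with (INR (S w) * (1 + / INR (S w)))
    by (rewrite (S_INR (S w)); field; lra).
  rewrite Rpow_mult_distr, Rmult_comm. apply Rmult_le_compat_r; [apply pow_le; lra|].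
  apply Rle_trans with (exp (/ INR (S w)) ^ S w).
  - apply pow_incr. pose proof (exp_ineq1_le (/ INR (S w))).
    pose proof (Rinv_0_lt_compat _ Hx). lra.
  - rewrite exp_pow. right. f_equal. field. lra.
Qed.

Lemma pow_le_exp_mul_fact w : INR w ^ w <= exp (INR w) * INR (fact w).
Proof.
  induction w as [|w IH]; [simpl; rewrite exp_0; lra|].
  rewrite fact_simpl, mult_INR, <- tech_pow_Rmult.
  replace (exp (INR (S w))) with (exp (INR w) * exp 1) by (rewrite S_INR, exp_plus; ring).
  pose proof (pos_INR (S w)) as Hs.
  apply Rle_trans with (INR (S w) * (exp 1 * INR w ^ w));
    [apply Rmult_le_compat_l, succ_pow_le_exp_mul_pow; lra|].
  pose proof (exp_pos 1).
  replace (exp (INR w) * exp 1 * (INR (S w) * INR (fact w)))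
    with (INR (S w) * (exp 1 * (exp (INR w) * INR (fact w)))) by ring.
  apply Rmult_le_compat_l; [lra|]. apply Rmult_le_compat_l; lra.
Qed.

Lemma C_le_entropy n w :
  (1 <= w <= n)%nat -> Binomial.C n w <= (exp 1 * INR n / INR w) ^ w.
Proof.
  intros Hw. eapply Rle_trans; [apply C_le_pow_div_fact; lia|].
  assert (Hw0 : 0 < INR w ^ w) by (apply pow_lt, lt_0_INR; lia).
  pose proof (INR_fact_lt_0 w). pose proof (pow_le (INR n) w (pos_INR n)).
  pose proof (pow_le_exp_mul_fact w) as Hf.
  replace ((exp 1 * INR n / INR w) ^ w) with (INR n ^ w * exp (INR w) / INR w ^ w).
  - apply Rmult_le_reg_r with (INR (fact w) * INR w ^ w); [nra|].
    replace (INR n ^ w / INR (fact w) * (INR (fact w) * INR w ^ w)) with (INR n ^ w * INR w ^ w)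
      by (field; lra).
    replace (INR n ^ w * exp (INR w) / INR w ^ w * (INR (fact w) * INR w ^ w))
      with (INR n ^ w * (exp (INR w) * INR (fact w))) by (field; lra).
    apply Rmult_le_compat_l; assumption.
  - replace (exp (INR w)) with (exp 1 ^ w) by (rewrite exp_pow; f_equal; ring).
    unfold Rdiv. rewrite !Rpow_mult_distr, pow_inv. ring.
Qed.

Lemma binsum_full n : binsum n n = 2 ^ n - 1.
Proof.
  assert (Hsum : forall w, binsum n w = sum_f_R0 (Binomial.C n) w - 1).
  { induction w as [|w IH]; simpl.
    - unfold Binomial.C. rewrite Nat.sub_0_r. simpl fact. rewrite Rmult_1_l.
      field. apply INR_fact_neq_0.
    - rewrite IH. ring. }
  rewrite Hsum. replace 2 with (1 + 1) by ring. rewrite Binomial.binomial.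
  f_equal. apply sum_eq. intros i _. rewrite !pow1. ring.
Qed.

Lemma wsearch_spec n q w0 :
  0 <= q - 1 ->
  (wsearch n q w0 <= w0)%nat /\ binsum n (wsearch n q w0) <= q - 1 /\
  (wsearch n q w0 = w0 \/ q - 1 < binsum n (S (wsearch n q w0))).
Proof.
  intros Hq. induction w0 as [|w0 IH]; simpl.
  - repeat split; [lia | simpl; lra | auto].
  - destruct (Rle_dec (binsum n w0 + Binomial.C n (S w0)) (q - 1)) as [Hle|Hgt].
    + repeat split; [lia | exact Hle | auto].
    + destruct IH as [IH1 [IH2 [IH3|IH3]]]; repeat split; try lia; try assumption.
      * right. rewrite IH3. simpl. lra.
      * right. exact IH3.
Qed.

Lemma wstar_spec n q :
  1 <= q -> q < 2 ^ n ->
  (wstar n q < n)%nat /\ binsum n (wstar n q) <= q - 1 < binsum n (S (wstar n q)).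
Proof.
  intros H1 H2. unfold wstar. destruct (wsearch_spec n q n ltac:(lra)) as [Hle [Hsum [Heq|Hgt]]].
  - rewrite Heq, binsum_full in Hsum. lra.
  - repeat split; [|assumption|assumption].
    destruct (Nat.eq_dec (wsearch n q n) n) as [Heq|Hne]; [|lia].
    rewrite Heq, binsum_full in Hsum. lra.
Qed.

Fixpoint sum_upto (B : nat -> R) (W : nat) : R :=
  match W with
  | O => 0
  | S W' => sum_upto B W' + B W
  end.

Lemma sum_upto_nonneg (B : nat -> R) W : (forall w, 0 <= B w) -> 0 <= sum_upto B W.
Proof. intros H. induction W as [|W IH]; simpl; [lra | specialize (H (S W)); lra]. Qed.

Lemma sum_upto_plus (B B' : nat -> R) W :
  sum_upto (fun w => B w + B' w) W = sum_upto B W + sum_upto B' W.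
Proof. induction W as [|W IH]; simpl; [lra | rewrite IH; ring]. Qed.

Lemma sum_upto_scal c (B : nat -> R) W : sum_upto (fun w => c * B w) W = c * sum_upto B W.
Proof. induction W as [|W IH]; simpl; [ring | rewrite IH; ring]. Qed.

Lemma sum_upto_geom a W : 0 <= a < 1 -> sum_upto (pow a) W <= a / (1 - a).
Proof.
  intros Ha. assert (Heq : sum_upto (pow a) W = a * (1 - a ^ W) / (1 - a)).
  { induction W as [|W IH]; simpl sum_upto; [simpl; field; lra|].
    rewrite IH. simpl. field. lra. }
  rewrite Heq. pose proof (pow_le a W ltac:(lra)).
  unfold Rdiv. apply Rmult_le_compat_r; [left; apply Rinv_0_lt_compat; lra | nra].
Qed.

Definition eps_term (m : nat) (f : R) (w : nat) : R := / 2 ^ m * (1 + (1 - 2 * f) ^ w) ^ m.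

Lemma eps_term_nonneg m f w : 0 <= f <= 1/2 -> 0 <= eps_term m f w.
Proof.
  intros Hf. unfold eps_term. apply Rmult_le_pos.
  - left. apply Rinv_0_lt_compat, pow_lt. lra.
  - apply pow_le. pose proof (pow_le (1 - 2 * f) w ltac:(lra)). lra.
Qed.

Lemma epssum_le_split n m f g (B : nat -> R) :
  0 <= g -> (forall w, 0 <= B w) ->
  (forall w, (1 <= w <= n)%nat ->
     eps_term m f w <= g \/ Binomial.C n w * eps_term m f w <= B w) ->
  forall W, (W <= n)%nat -> epssum n m f W <= g * binsum n W + sum_upto B W.
Proof.
  intros Hg HB Hsplit W.
  induction W as [|W IH]; intros HW; cbn [epssum binsum sum_upto]; [lra|].
  specialize (IH ltac:(lia)). pose proof (C_nonneg n (S W)). specialize (HB (S W)).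
  rewrite Rmult_assoc. fold (eps_term m f (S W)).
  destruct (Hsplit (S W) ltac:(lia)) as [Hle|Hle].
  - apply Rmult_le_compat_l with (r := Binomial.C n (S W)) in Hle; [nra | assumption].
  - assert (0 <= g * Binomial.C n (S W)) by (apply Rmult_le_pos; assumption). nra.
Qed.

Lemma epsilon_le_split n m q f g (B : nat -> R) :
  1 < q -> q < 2 ^ n -> 0 <= f <= 1/2 -> 0 <= g -> (forall w, 0 <= B w) ->
  (forall w, (1 <= w <= n)%nat ->
     eps_term m f w <= g \/ Binomial.C n w * eps_term m f w <= B w) ->
  epsilon n m q f <= g + sum_upto B (S (wstar n q)) / (q - 1).
Proof.
  intros Hq1 Hqn Hf Hg HB Hsplit.
  destruct (wstar_spec n q ltac:(lra) Hqn) as [Hlt [Hbin_le Hbin_gt]].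
  set (W := wstar n q) in *.
  assert (Hrem : 0 <= rem n q <= Binomial.C n (S W)).
  { unfold rem. fold W. simpl binsum in Hbin_gt. lra. }
  assert (Hlast : rem n q * eps_term m f (S W) <= g * rem n q + B (S W)).
  { pose proof (eps_term_nonneg m f (S W) Hf). specialize (HB (S W)).
    destruct (Hsplit (S W) ltac:(lia)) as [Hle|Hle].
    - apply Rmult_le_compat_l with (r := rem n q) in Hle; lra.
    - assert (rem n q * eps_term m f (S W) <= Binomial.C n (S W) * eps_term m f (S W))
        by (apply Rmult_le_compat_r; lra).
      assert (0 <= g * rem n q) by (apply Rmult_le_pos; lra). lra. }
  pose proof (epssum_le_split n m f g B Hg HB Hsplit W ltac:(lia)) as Hsum.
  assert (Hq : binsum n W + rem n q = q - 1) by (unfold rem; fold W; ring).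
  unfold epsilon. fold W.
  replace (rem n q / 2 ^ m * (1 + (1 - 2 * f) ^ S W) ^ m) with (rem n q * eps_term m f (S W))
    by (unfold eps_term, Rdiv; ring).
  replace (g + sum_upto B (S W) / (q - 1))
    with (/ (q - 1) * (g * (binsum n W + rem n q) + sum_upto B (S W)))
    by (rewrite Hq; field; lra).
  apply Rmult_le_compat_l; [left; apply Rinv_0_lt_compat; lra|].
  cbn [sum_upto]. lra.
Qed.

Lemma pow_sub_le_exp f w : 0 <= f <= 1/2 -> 0 <= (1 - 2 * f) ^ w <= exp (- (2 * f * INR w)).
Proof.
  intros Hf. split; [apply pow_le; lra|].
  replace (- (2 * f * INR w)) with (- (2 * f) * INR w) by ring. rewrite <- exp_pow.
  apply pow_incr. pose proof (exp_ineq1_le (- (2 * f))). lra.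
Qed.

Lemma eps_term_le_exp m f w :
  0 <= f <= 1/2 ->
  eps_term m f w <= exp (- (INR m * (1 - exp (- (2 * f * INR w))) / 2)).
Proof.
  intros Hf. pose proof (pow_sub_le_exp f w Hf) as Hy.
  set (y := (1 - 2 * f) ^ w) in *. set (u := 2 * f * INR w) in *.
  replace (eps_term m f w) with (((1 + y) / 2) ^ m)
    by (unfold eps_term, Rdiv; fold y; rewrite Rpow_mult_distr, pow_inv; ring).
  apply Rle_trans with (exp (- (1 - y) / 2) ^ m).
  - apply pow_incr. pose proof (exp_ineq1_le (- (1 - y) / 2)). lra.
  - rewrite exp_pow. apply exp_le. pose proof (pos_INR m). nra.
Qed.

Lemma eps_term_le_of_small_mass m f w lam :
  0 <= f <= 1/2 -> INR m * exp (- (2 * f * INR w)) <= lam ->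
  eps_term m f w <= exp lam / 2 ^ m.
Proof.
  intros Hf Hmass. pose proof (pow_sub_le_exp f w Hf) as Hy.
  unfold eps_term, Rdiv. rewrite Rmult_comm.
  apply Rmult_le_compat_r; [left; apply Rinv_0_lt_compat, pow_lt; lra|].
  apply Rle_trans with (exp ((1 - 2 * f) ^ w) ^ m).
  - apply pow_incr. pose proof (exp_ineq1_le ((1 - 2 * f) ^ w)). lra.
  - rewrite exp_pow. apply exp_le. pose proof (pos_INR m). nra.
Qed.

Lemma C_eps_term_le_small n m f w :
  0 <= f <= 1/2 -> (w <= n)%nat -> 2 * f * INR w <= 1 ->
  Binomial.C n w * eps_term m f w <= (INR n * exp (- (INR m * f / 2))) ^ w.
Proof.
  intros Hf Hw Hu. rewrite Rpow_mult_distr.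
  apply Rmult_le_compat; [apply C_nonneg | apply eps_term_nonneg, Hf | apply C_le_pow, Hw|].
  eapply Rle_trans; [apply eps_term_le_exp, Hf|].
  rewrite exp_pow. apply exp_le.
  pose proof (exp_neg_le_1_sub_half (2 * f * INR w) ltac:(pose proof (pos_INR w); nra)).
  pose proof (pos_INR m). nra.
Qed.

Lemma C_eps_term_le_entropy n m f w :
  0 <= f <= 1/2 -> (1 <= w <= n)%nat ->
  Binomial.C n w * eps_term m f w
  <= (exp 1 * INR n / INR w
      * exp (- (INR m * (1 - exp (- (2 * f * INR w))) / (2 * INR w)))) ^ w.
Proof.
  intros Hf Hw. assert (Hw0 : 0 < INR w) by (apply lt_0_INR; lia).
  rewrite Rpow_mult_distr.
  apply Rmult_le_compat; [apply C_nonneg | apply eps_term_nonneg, Hf | apply C_le_entropy, Hw|].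
  eapply Rle_trans; [apply eps_term_le_exp, Hf|].
  rewrite exp_pow. right. f_equal. field. lra.
Qed.

Lemma middle_exponent_le A k delta L u t1 eta r :
  2 < k -> 0 < L -> 1 < u -> 0 <= r -> u <= L * (1 + r) ->
  A + 1 <= (k / 2 - 1) * t1 -> exp (- (L / t1)) <= eta -> 1 <= k * (1 - eta) ->
  delta <= 2 -> A + delta <= k * (1 - eta) / (1 + r) ->
  A + ln (L / u) - k * (L / u) * (1 - exp (- u)) <= - delta.
Proof.
  intros Hk HL Hu Hr HuL Ht1 Heta HK Hdelta Hmargin.
  (* For t >= t1 use 1 - e^-u >= 1/2 and ln t <= t - 1; for t < t1, u is so large that
     e^-u <= eta, and A + t - 1 - k (1 - eta) t decreases in t, with t >= 1 / (1 + r). *)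
  set (t := L / u).
  assert (Ht : 0 < t) by (apply Rdiv_lt_0_compat; lra).
  pose proof (ln_le_sub1 t Ht) as Hln.
  destruct (Rle_dec t1 t) as [Hbig|Hsmall].
  - assert (Hhalf : exp (- u) <= 1/2).
    { pose proof (exp_ineq1_le u). rewrite exp_Ropp.
      apply Rle_trans with (/ 2); [apply Rinv_le_contravar|]; lra. }
    assert (0 <= (k * t) * (1/2 - exp (- u))) by (apply Rmult_le_pos; nra).
    nra.
  - assert (Ht1pos : 0 < t1) by lra.
    assert (Hu_t1 : L / t1 <= u).
    { apply Rmult_le_reg_r with (t1 / u); [apply Rdiv_lt_0_compat; lra|].
      replace (L / t1 * (t1 / u)) with t by (unfold t; field; lra).
      replace (u * (t1 / u)) with t1 by (field; lra). lra. }
    assert (Hexp : exp (- u) <= eta) by (eapply Rle_trans; [apply exp_le|]; eauto; lra).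
    assert (Hlow : / (1 + r) <= t).
    { unfold t. apply Rmult_le_reg_r with (u * (1 + r)); [nra|].
      replace (/ (1 + r) * (u * (1 + r))) with u by (field; lra).
      replace (L / u * (u * (1 + r))) with (L * (1 + r)) by (field; lra). lra. }
    assert (Hdecr : (1 - k * (1 - eta)) * t <= (1 - k * (1 - eta)) * / (1 + r)) by nra.
    assert (Hr_frac : (1 - k * (1 - eta)) * / (1 + r) <= 1 - k * (1 - eta) / (1 + r)).
    { unfold Rdiv. rewrite Rmult_minus_distr_r, Rmult_1_l.
      assert (/ (1 + r) <= 1) by (rewrite <- Rinv_1; apply Rinv_le_contravar; lra). lra. }
    assert (0 <= (k * t) * (eta - exp (- u))) by (apply Rmult_le_pos; nra).
    nra.
Qed.

Lemma entropy_base_eq alpha k L n m w u :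
  0 < alpha -> 0 < k -> 0 < L -> 0 < INR m -> INR m = alpha * INR n -> (1 <= w)%nat ->
  u = 2 * (k * L / INR m) * INR w ->
  exp 1 * INR n / INR w * exp (- (INR m * (1 - exp (- u)) / (2 * INR w)))
  = exp (ln (2 * exp 1 * k / alpha) + ln (L / u) - k * (L / u) * (1 - exp (- u))).
Proof.
  intros Ha Hk HL Hm Hmn Hw Hu. assert (Hw0 : 0 < INR w) by (apply lt_0_INR; lia).
  pose proof (exp_pos 1).
  assert (Hu0 : 0 < u) by (rewrite Hu; apply Rmult_lt_0_compat;
                           [apply Rmult_lt_0_compat; [lra | apply Rdiv_lt_0_compat; nra] | lra]).
  unfold Rminus. rewrite !exp_plus, !exp_ln.
  - replace (L / u) with (INR m / (2 * k * INR w)) by (rewrite Hu; field; lra).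
    replace (INR n) with (INR m / alpha) by (rewrite Hmn; field; lra).
    replace (- (k * (INR m / (2 * k * INR w)) * (1 + - exp (- u))))
      with (- (INR m * (1 + - exp (- u)) / (2 * INR w))) by (field; lra).
    field. lra.
  - apply Rdiv_lt_0_compat; lra.
  - apply Rdiv_lt_0_compat; [nra | lra].
Qed.

Lemma flip_rate_range k L M : 0 < k -> 0 < L -> 2 * k * L <= M -> 0 <= k * L / M <= 1 / 2.
Proof.
  intros Hk HL HM. assert (0 < M) by nra.
  split; [left; apply Rdiv_lt_0_compat; nra|].
  apply Rmult_le_reg_r with M; [lra|].
  replace (k * L / M * M) with (k * L) by (field; lra). lra.
Qed.

Lemma C_eps_term_le_middle alpha k L delta n m w :
  0 < alpha -> 0 < k -> 0 < L -> INR m = alpha * INR n -> 2 * k * L <= INR m ->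
  0 <= delta -> (1 <= w <= n)%nat -> INR m < 2 * k * L * INR w ->
  (let u := 2 * (k * L / INR m) * INR w in
   ln (2 * exp 1 * k / alpha) + ln (L / u) - k * (L / u) * (1 - exp (- u)) <= - delta) ->
  Binomial.C n w * eps_term m (k * L / INR m) w
  <= exp (- (delta * INR m / (4 * k * L))) * exp (- (delta / 2)) ^ w.
Proof.
  intros Ha Hk HL Hmn Hkm Hdelta Hw Hmiddle Hphi.
  assert (Hm : 0 < INR m) by nra.
  eapply Rle_trans; [apply C_eps_term_le_entropy; [apply flip_rate_range | ]; assumption|].
  rewrite (entropy_base_eq alpha k L n m w _) by (lia || lra || reflexivity).
  apply Rle_trans with (exp (- delta * INR w)).
  { rewrite <- exp_pow. apply pow_incr. split; [left; apply exp_pos | apply exp_le, Hphi]. }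
  assert (Hw_lb : INR m / (2 * k * L) <= INR w).
  { apply Rmult_le_reg_r with (2 * k * L); [nra|].
    replace (INR m / (2 * k * L) * (2 * k * L)) with (INR m) by (field; lra). lra. }
  rewrite exp_pow, <- exp_plus. apply exp_le.
  replace (- (delta * INR m / (4 * k * L))) with (- (delta / 2) * (INR m / (2 * k * L)))
    by (field; lra).
  nra.
Qed.

Lemma C_eps_term_dichotomy alpha k L lam delta n m w :
  0 < alpha -> 0 < k -> 0 < L -> exp L = INR m -> INR m = alpha * INR n ->
  2 * k * L <= INR m -> 0 < lam -> 0 <= delta ->
  (forall u, 1 < u -> u < L + ln (/ lam) ->
     ln (2 * exp 1 * k / alpha) + ln (L / u) - k * (L / u) * (1 - exp (- u)) <= - delta) ->
  (1 <= w <= n)%nat ->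
  eps_term m (k * L / INR m) w <= exp lam / 2 ^ m \/
  Binomial.C n w * eps_term m (k * L / INR m) w
  <= (INR n * exp (- (k * L / 2))) ^ w
     + exp (- (delta * INR m / (4 * k * L))) * exp (- (delta / 2)) ^ w.
Proof.
  intros Ha Hk HL HmL Hmn Hkm Hlam Hdelta Hphi Hw.
  assert (Hm : 0 < INR m) by (rewrite <- HmL; apply exp_pos).
  set (f := k * L / INR m).
  pose proof (flip_rate_range k L (INR m) Hk HL Hkm) as Hf. fold f in Hf.
  set (u := 2 * f * INR w).
  assert (Hu : INR m * u = 2 * k * L * INR w) by (unfold u, f; field; lra).
  assert (0 <= exp (- (delta * INR m / (4 * k * L))) * exp (- (delta / 2)) ^ w)
    by (apply Rmult_le_pos; [left; apply exp_pos | apply pow_le; left; apply exp_pos]).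
  assert (0 <= (INR n * exp (- (k * L / 2))) ^ w)
    by (apply pow_le, Rmult_le_pos; [apply pos_INR | left; apply exp_pos]).
  destruct (Rle_dec (L + ln (/ lam)) u) as [Hlarge|Hnot_large].
  { left. apply eps_term_le_of_small_mass; [exact Hf|]. fold u.
    rewrite <- HmL, <- (exp_ln lam Hlam), <- exp_plus. apply exp_le.
    rewrite ln_Rinv in Hlarge; lra. }
  right. destruct (Rle_dec u 1) as [Hsmall|Hmiddle].
  { replace (k * L / 2) with (INR m * f / 2) by (unfold f; field; lra).
    pose proof (C_eps_term_le_small n m f w Hf ltac:(lia) Hsmall). lra. }
  apply Rnot_le_lt in Hmiddle.
  assert (0 < INR m * (u - 1)) by (apply Rmult_lt_0_compat; lra).
  assert (Hgt : INR m < 2 * k * L * INR w) by lra.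
  pose proof (C_eps_term_le_middle alpha k L delta n m w Ha Hk HL Hmn Hkm Hdelta Hw Hgt
                (Hphi u ltac:(lra) ltac:(lra))) as Hmid.
  fold f in Hmid. lra.
Qed.

Lemma split_bound_le g S P Q gamma :
  1 <= P -> 1 <= Q -> 1 < P * Q -> 0 <= g <= (1 + gamma) / 2 -> 1 < gamma ->
  S <= (gamma - 1) / 2 ->
  g / P + S / (P * Q - 1) <= gamma * (Q / (P * Q - 1)).
Proof.
  intros HP HQ HPQ Hg Hgamma HS.
  apply Rmult_le_reg_r with (P * Q - 1); [lra|].
  replace ((g / P + S / (P * Q - 1)) * (P * Q - 1)) with (g * Q - g / P + S) by (field; lra).
  replace (gamma * (Q / (P * Q - 1)) * (P * Q - 1)) with (gamma * Q) by (field; lra).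
  assert (0 <= g / P) by (apply Rmult_le_pos; [lra | left; apply Rinv_0_lt_compat; lra]).
  assert (g * Q <= (1 + gamma) / 2 * Q) by (apply Rmult_le_compat_r; lra).
  assert ((gamma - 1) / 2 <= (gamma - 1) / 2 * Q) by nra.
  lra.
Qed.

Section Constants.

Variables (alpha k gamma : R) (c : nat).
Hypothesis alpha_range : 0 < alpha < 1.
Hypothesis k_large : 36 / 10 - 5 / 4 * log2 alpha <= k.
Hypothesis gamma_gt_1 : 1 < gamma.

Let A := ln (2 * exp 1 * k / alpha).
Let D := k - A.

Lemma k_gt_A : 36 / 10 < k /\ 0 < A < k.
Proof.
  unfold log2 in k_large. pose proof ln_2_lt. pose proof ln_lt_2.
  assert (Hla : ln alpha < 0) by (rewrite <- ln_1; apply ln_increasing; lra).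
  assert (Hk36 : 36 / 10 < k).
  { assert (ln alpha / ln 2 < 0) by (apply Rdiv_neg_pos; lra). lra. }
  assert (Hla2 : 4 / 5 * (36 / 10 - k) * ln 2 <= ln alpha).
  { assert (Hmul : (36 / 10 - k) * ln 2 <= 5 / 4 * (ln alpha / ln 2) * ln 2)
      by (apply Rmult_le_compat_r; lra).
    replace (5 / 4 * (ln alpha / ln 2) * ln 2) with (5 / 4 * ln alpha) in Hmul by (field; lra).
    lra. }
  assert (HA : A = ln 2 + 1 + ln k - ln alpha).
  { unfold A, Rdiv. pose proof (exp_pos 1).
    rewrite !ln_mult, ln_exp, ln_Rinv; try lra;
      repeat apply Rmult_lt_0_compat; try apply Rinv_0_lt_compat; lra. }
  assert (Hlnk : ln k <= ln (36 / 10) + k / (36 / 10) - 1).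
  { replace (ln k) with (ln (36 / 10) + ln (k / (36 / 10)))
      by (unfold Rdiv at 2; rewrite ln_mult, ln_Rinv; lra).
    pose proof (ln_le_sub1 (k / (36 / 10)) ltac:(apply Rdiv_lt_0_compat; lra)). lra. }
  assert (Hln36 : ln (36 / 10) <= 2 * ln 2 - 1 / 10).
  { replace (36 / 10) with (2 * 2 * (9 / 10)) by lra. rewrite !ln_mult; try lra.
    pose proof (ln_le_sub1 (9 / 10) ltac:(lra)). lra. }
  assert (0 <= (k - 36 / 10) * (3 / 4 - ln 2)) by (apply Rmult_le_pos; lra).
  repeat split; [lra | | nra].
  rewrite HA. pose proof (ln_le 1 k ltac:(lra) ltac:(lra)). rewrite ln_1 in *. lra.
Qed.

(* The series of the small and middle regimes have ratio at most [s] and tail factor at most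
   [Emax]; these are chosen so that each contributes at most (gamma - 1)/4. *)
Let lam := Rmin 1 (ln ((1 + gamma) / 2)).
Let delta := Rmin 1 (D / 2).
Let eta := D / (4 * k).
Let t1 := (A + 1) / (k / 2 - 1).
Let s := Rmin (1 / 2) ((gamma - 1) / 8).
Let b := exp (- (delta / 2)).
Let Emax := (gamma - 1) * (1 - b) / (4 * b).

Lemma constants_range :
  0 < lam <= 1 /\ exp lam <= (1 + gamma) / 2 /\ 0 < delta <= 1 /\ delta <= D / 2 /\
  0 < t1 /\ 0 < s <= 1 / 2 /\ s <= (gamma - 1) / 8 /\ 0 < b < 1 /\ 0 < Emax.
Proof.
  destruct k_gt_A as [Hk [HA HAk]].
  assert (Hg : 0 < ln ((1 + gamma) / 2)) by (rewrite <- ln_1; apply ln_increasing; lra).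
  assert (Hlam : 0 < lam <= 1) by (split; [apply Rmin_glb_lt | apply Rmin_l]; lra).
  assert (Hdelta : 0 < delta <= 1) by (split; [apply Rmin_glb_lt | apply Rmin_l]; unfold D; lra).
  assert (Hb : 0 < b < 1).
  { split; [apply exp_pos|]. rewrite <- exp_0. apply exp_increasing. lra. }
  assert (Hexp : exp lam <= (1 + gamma) / 2).
  { apply Rle_trans with (exp (ln ((1 + gamma) / 2))); [apply exp_le, Rmin_r|].
    rewrite exp_ln; lra. }
  assert (HdD : delta <= D / 2) by apply Rmin_r.
  assert (Ht1 : 0 < t1) by (apply Rdiv_lt_0_compat; lra).
  assert (Hs : 0 < s <= 1 / 2) by (split; [apply Rmin_glb_lt | apply Rmin_l]; lra).
  assert (Hsg : s <= (gamma - 1) / 8) by apply Rmin_r.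
  assert (HE : 0 < Emax) by (apply Rdiv_lt_0_compat; nra).
  tauto.
Qed.

Definition large_log (L : R) : Prop :=
  1 <= L /\ 2 * k * L <= exp L /\ exp (- ((k / 2 - 1) * L)) <= alpha * s /\
  exp (- (/ t1 * L)) <= eta /\ 4 * k * ln (/ lam) / D <= L /\
  exp (- (delta / (4 * k) * exp L / L)) <= Emax /\
  (INR c + 1) * alpha / (1 - alpha) <= exp L.

Lemma eventually_large_log : eventually large_log.
Proof.
  destruct k_gt_A as [Hk [HA HAk]].
  destruct constants_range as (Hlam & _ & Hdelta & _ & Ht1 & Hs & _ & _ & HEmax).
  unfold large_log.
  repeat apply eventually_and.
  - apply eventually_ge.
  - apply eventually_exp_ge_mul.
  - apply eventually_exp_neg_le; [lra | apply Rmult_lt_0_compat; lra].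
  - apply eventually_exp_neg_le; [apply Rinv_0_lt_compat, Ht1|].
    unfold eta, D. apply Rdiv_lt_0_compat; lra.
  - apply eventually_ge.
  - apply eventually_exp_neg_exp_div_le; [apply Rdiv_lt_0_compat | exact HEmax]; lra.
  - destruct (eventually_ge ((INR c + 1) * alpha / (1 - alpha))) as [L0 H0].
    exists L0. intros L HL. pose proof (exp_ineq1_le L). specialize (H0 L HL). lra.
Qed.

Lemma middle_exponent_at_large_log L :
  large_log L -> forall u, 1 < u -> u < L + ln (/ lam) ->
  A + ln (L / u) - k * (L / u) * (1 - exp (- u)) <= - delta.
Proof.
  intros (HL & _ & _ & Heta & HlamL & _) u Hu HuL.
  destruct k_gt_A as [Hk [HA HAk]].
  destruct constants_range as (Hlam & _ & Hdelta & HdD & _).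
  assert (HDdef : D = k - A) by reflexivity.
  assert (HD : 0 < D) by lra.
  assert (HK : k * (1 - eta) = k - D / 4) by (unfold eta; field; lra).
  set (r := ln (/ lam) / L).
  assert (Hr0 : 0 <= r).
  { unfold r, Rdiv. apply Rmult_le_pos; [|left; apply Rinv_0_lt_compat; lra].
    rewrite ln_Rinv by lra. pose proof (ln_le lam 1 ltac:(lra) ltac:(lra)).
    rewrite ln_1 in *. lra. }
  assert (Hr : r <= eta).
  { unfold r, eta. apply Rmult_le_reg_r with L; [lra|].
    replace (ln (/ lam) / L * L) with (ln (/ lam)) by (field; lra).
    replace (ln (/ lam)) with (4 * k * ln (/ lam) / D * (D / (4 * k))) by (field; lra).
    rewrite (Rmult_comm (D / (4 * k)) L).
    apply Rmult_le_compat_r; [left; apply Rdiv_lt_0_compat | exact HlamL]; lra. }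
  apply middle_exponent_le with (t1 := t1) (eta := eta) (r := r); try lra.
  - replace (L * (1 + r)) with (L + ln (/ lam)) by (unfold r; field; lra). lra.
  - unfold t1. right. field. lra.
  - replace (L / t1) with (/ t1 * L) by (unfold Rdiv; ring). exact Heta.
  - apply Rmult_le_reg_r with (1 + r); [lra|].
    replace (k * (1 - eta) / (1 + r) * (1 + r)) with (k * (1 - eta)) by (field; lra).
    assert ((A + delta) * r <= k * eta) by (apply Rmult_le_compat; lra).
    lra.
Qed.

Lemma sum_upto_tail_le a E W :
  0 <= a <= s -> 0 <= E <= Emax ->
  sum_upto (fun w => a ^ w + E * b ^ w) W <= (gamma - 1) / 2.
Proof.
  intros Ha HE.
  destruct constants_range as (_ & _ & _ & _ & _ & Hs & Hsg & Hb & _).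
  rewrite sum_upto_plus, sum_upto_scal.
  pose proof (sum_upto_geom a W ltac:(lra)) as Hgeom_a.
  pose proof (sum_upto_geom b W ltac:(lra)) as Hgeom_b.
  assert (Ha2 : a / (1 - a) <= 2 * s).
  { apply Rmult_le_reg_r with (1 - a); [lra|].
    replace (a / (1 - a) * (1 - a)) with a by (field; lra).
    assert (0 <= s * (1 / 2 - a)) by (apply Rmult_le_pos; lra). lra. }
  assert (HEb : E * sum_upto (pow b) W <= Emax * (b / (1 - b))).
  { apply Rmult_le_compat; try lra. apply sum_upto_nonneg. intros w. apply pow_le. lra. }
  assert (Emax * (b / (1 - b)) = (gamma - 1) / 4) by (unfold Emax; field; lra).
  change (sum_upto (fun w => a ^ w) W) with (sum_upto (pow a) W).
  change (sum_upto (fun w => b ^ w) W) with (sum_upto (pow b) W).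
  lra.
Qed.

Lemma small_ratio_le L n :
  large_log L -> exp L = alpha * INR n -> INR n * exp (- (k * L / 2)) <= s.
Proof.
  intros (_ & _ & Hsmall & _) Hn.
  replace (INR n * exp (- (k * L / 2))) with (exp (- ((k / 2 - 1) * L)) / alpha).
  - apply Rmult_le_reg_r with alpha; [lra|].
    replace (exp (- ((k / 2 - 1) * L)) / alpha * alpha) with (exp (- ((k / 2 - 1) * L)))
      by (field; lra). lra.
  - replace (INR n) with (exp L / alpha) by (rewrite Hn; field; lra).
    replace (- ((k / 2 - 1) * L)) with (L + - (k * L / 2)) by field.
    rewrite exp_plus. field. lra.
Qed.

Lemma tail_weight_le L : large_log L -> exp (- (delta * exp L / (4 * k * L))) <= Emax.
Proof.
  intros (HL & _ & _ & _ & _ & Htail & _). destruct k_gt_A as [Hk _].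
  replace (delta * exp L / (4 * k * L)) with (delta / (4 * k) * exp L / L) by (field; lra).
  exact Htail.
Qed.

Lemma length_gap n m :
  INR m = alpha * INR n -> (INR c + 1) * alpha / (1 - alpha) <= INR m -> (m + c < n)%nat.
Proof.
  intros Hmn Hc.
  assert (Hgap : INR c + 1 <= INR m * (1 - alpha) / alpha).
  { apply Rmult_le_reg_r with (alpha / (1 - alpha)); [apply Rdiv_lt_0_compat; lra|].
    replace (INR m * (1 - alpha) / alpha * (alpha / (1 - alpha))) with (INR m) by (field; lra).
    replace ((INR c + 1) * (alpha / (1 - alpha))) with ((INR c + 1) * alpha / (1 - alpha))
      by (field; lra).
    lra. }
  apply INR_lt. rewrite plus_INR.
  replace (INR n) with (INR m + INR m * (1 - alpha) / alpha) by (rewrite Hmn; field; lra).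
  lra.
Qed.

Lemma epsilon_le_at_large_log n m :
  0 < INR m -> INR m = alpha * INR n -> large_log (ln (INR m)) ->
  epsilon n m (2 ^ (m + c)) (k * ln (INR m) / INR m)
  <= gamma * (2 ^ c / (2 ^ (m + c) - 1)).
Proof.
  intros Hm Hmn Hscale. pose proof Hscale as (HL & Hkm & _ & _ & _ & _ & Hc).
  destruct k_gt_A as [Hk _].
  destruct constants_range as (Hlam & Hexp_lam & Hdelta & _ & _ & _ & _ & Hb & _).
  set (L := ln (INR m)) in *.
  assert (HmL : exp L = INR m) by (apply exp_ln, Hm).
  rewrite HmL in Hkm, Hc.
  set (a := INR n * exp (- (k * L / 2))).
  set (E := exp (- (delta * INR m / (4 * k * L)))).
  assert (Ha : 0 <= a <= s).
  { split; [apply Rmult_le_pos; [apply pos_INR | left; apply exp_pos]|].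
    apply small_ratio_le; [exact Hscale | lra]. }
  assert (HE : 0 <= E <= Emax).
  { split; [left; apply exp_pos|]. unfold E. rewrite <- HmL. apply tail_weight_le, Hscale. }
  assert (Hm1 : (1 <= m)%nat) by (destruct m; [simpl in Hm; lra | lia]).
  eapply Rle_trans.
  { apply (epsilon_le_split n m (2 ^ (m + c)) _ (exp lam / 2 ^ m) (fun w => a ^ w + E * b ^ w)).
    - apply Rlt_pow_R1; [lra | lia].
    - apply Rlt_pow; [lra | apply length_gap; assumption].
    - apply flip_rate_range; lra.
    - apply Rmult_le_pos; [left; apply exp_pos | left; apply Rinv_0_lt_compat, pow_lt; lra].
    - intros w. pose proof (pow_le a w (proj1 Ha)). pose proof (pow_le b w ltac:(lra)).
      pose proof (Rmult_le_pos E (b ^ w) (proj1 HE) ltac:(assumption)). lra.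
    - intros w Hw.
      apply (C_eps_term_dichotomy alpha k L lam delta n m w); try lra.
      + exact (middle_exponent_at_large_log L Hscale).
      + exact Hw. }
  rewrite pow_add. apply split_bound_le; try lra.
  - apply pow_R1_Rle; lra.
  - apply pow_R1_Rle; lra.
  - rewrite <- pow_add. apply Rlt_pow_R1; [lra | lia].
  - split; [left; apply exp_pos | lra].
  - apply sum_upto_tail_le; assumption.
Qed.

End Constants.

Theorem lemma8 :
  forall (alpha : R) (c : nat),
    0 < alpha < 1 ->
    forall (gamma k : R),
      1 < gamma ->
      36 / 10 - 5 / 4 * log2 alpha <= k ->
      exists Nk : nat, (0 < Nk)%nat /\
        forall n m : nat,
          (Nk <= n)%nat ->
          INR m = alpha * INR n ->
          let q := 2 ^ (m + c) in
          let f := k * ln (INR m) / INR m in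
          epsilon n m q f <= gamma * (2 ^ c / (q - 1)).
Proof.
  intros alpha c Ha gamma k Hgamma Hk.
  destruct (eventually_large_log alpha k gamma c Ha Hk Hgamma) as [L0 HL0].
  destruct (INR_archimed 1 (exp L0 / alpha) ltac:(lra)) as [N HNL].
  rewrite Rmult_1_r in HNL.
  exists (S N). split; [lia|].
  intros n m Hn Hmn q f.
  assert (HmL0 : exp L0 <= INR m).
  { apply le_INR in Hn. rewrite S_INR in Hn. rewrite Hmn.
    apply Rmult_le_reg_r with (/ alpha); [apply Rinv_0_lt_compat; lra|].
    replace (alpha * INR n * / alpha) with (INR n) by (field; lra). unfold Rdiv in HNL. lra. }
  pose proof (exp_pos L0).
  apply (epsilon_le_at_large_log alpha k gamma c Ha Hk Hgamma n m); [lra | exact Hmn |].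
  apply HL0. rewrite <- (ln_exp L0). apply ln_le; assumption.
Qed.
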